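(* Let $d \geq 3$, $s\ge1$, and let $\pi, \sigma$ be permutations of $\{1,\dots,d\}$ such that the cycle decomposition of $\pi^{-1}\sigma$ contains a cycle of length $p$ for some $p \geq 3$. Identifying permutations with their permutation matrices, $$\{\lambda \in [0,1] : (1-\lambda) \pi + \lambda \sigma \in \mathsf U_{d,s}\} = \{\lambda \in [0,1] : (1-\lambda) \pi + \lambda \sigma \in \mathsf L_{d,s}\} = \{k/s : k = 0, \ldots, s\}.$$ In particular, this holds for every edge $[\pi,\sigma]$ of the Birkhoff polytope $\mathsf B_d$.
   Context: $\mathsf B_d$ is the set (Birkhoff polytope) of $d\times d$ bistochastic matrices. For $U\in\mathcal U(ds)$ viewed as a $d\times d$ block matrix with blocks $U_{ij}\in M_s(\mathbb C)$, $\phi_{d,s}(U)=\big(\tfrac1s\|U_{ij}\|_F^2\big)_{i,j=1}^d$ with $\|X\|_F=\operatorname{Tr}(XX^* )^{1/2}$, and $\mathsf U_{d,s}:=\phi_{d,s}(\mathcal U(ds))$. $\mathsf{Brac}_{d,s}$ is the set of pairs of probability vectors $(\alpha,\beta)$ in $\mathbb R^d$ for which there exist $A_1,\dots,A_d,B_1,\dots,B_d\in M_s(\mathbb C)$ with $\sum_i A_iA_i^*=\sum_iB_iB_i^*=I_s$, $\sum_iA_iB_i^*=0$, $\tfrac1s\|A_i\|_F^2=\alpha_i$, $\tfrac1s\|B_i\|_F^2=\beta_i$ for all $i$. $\mathsf L_{d,s}$ is the set of $B\in\mathsf B_d$ all of whose pairs of distinct rows and pairs of distinct columns belong to $\mathsf{Brac}_{d,s}$.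 *)

From HB Require Import structures.
From mathcomp Require Import all_boot all_order all_algebra all_fingroup.
From mathcomp Require Import complex.
From mathcomp Require Import reals.
Set Implicit Arguments. Unset Strict Implicit. Unset Printing Implicit Defensive.
Import Order.TTheory GRing.Theory Num.Theory.
Local Open Scope ring_scope.

Section Defs.
Variable R : realType.
Local Notation C := (complex R).

Definition ctrmx (m n : nat) (X : 'M[C]_(m, n)) : 'M[C]_(n, m) :=
  \matrix_(i, j) conjc (X j i).

Definition sqmod (z : C) : R := (complex.Re z) ^+ 2 + (complex.Im z) ^+ 2.

Definition frob2 (m n : nat) (X : 'M[C]_(m, n)) : R :=
  \sum_(a < m) \sum_(b < n) sqmod (X a b).

Definition unitary (n : nat) (U : 'M[C]_n) : Prop :=
  U *m ctrmx U = 1%:M /\ ctrmx U *m U = 1%:M.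

(* block (i,j) of a ds x ds matrix, of size s x s; row index (i,a) <-> i*s+a *)
Definition blk (d s : nat) (U : 'M[C]_(d * s)) (i j : 'I_d) : 'M[C]_s :=
  \matrix_(a, b) U (mxvec_index i a) (mxvec_index j b).

Definition phi (d s : nat) (U : 'M[C]_(d * s)) : 'M[R]_d :=
  \matrix_(i, j) ((s%:R)^-1 * frob2 (blk U i j)).

Definition Uset (d s : nat) (B : 'M[R]_d) : Prop :=
  exists U : 'M[C]_(d * s), unitary U /\ phi U = B.

Definition bistochastic (d : nat) (B : 'M[R]_d) : Prop :=
  (forall i j, 0 <= B i j) /\
  (forall i, \sum_j B i j = 1) /\ (forall j, \sum_i B i j = 1).

Definition probvec (d : nat) (a : 'I_d -> R) : Prop :=
  (forall i, 0 <= a i) /\ \sum_i a i = 1.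

Definition Brac (d s : nat) (alpha beta : 'I_d -> R) : Prop :=
  probvec alpha /\ probvec beta /\
  exists A Bm : 'I_d -> 'M[C]_s,
    \sum_i (A i *m ctrmx (A i)) = 1%:M /\
    \sum_i (Bm i *m ctrmx (Bm i)) = 1%:M /\
    \sum_i (A i *m ctrmx (Bm i)) = 0 /\
    (forall i, (s%:R)^-1 * frob2 (A i) = alpha i) /\
    (forall i, (s%:R)^-1 * frob2 (Bm i) = beta i).

Definition Lset (d s : nat) (B : 'M[R]_d) : Prop :=
  bistochastic B /\
  (forall i k : 'I_d, i != k -> Brac s (fun j => B i j) (fun j => B k j)) /\
  (forall j l : 'I_d, j != l -> Brac s (fun i => B i j) (fun i => B i l)).

End Defs.

From HB Require Import structures.
From mathcomp Require Import all_boot all_order all_algebra all_fingroup.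
From mathcomp Require Import complex reals.
From mathcomp Require Import ring lra.
Import Order.TTheory GRing.Theory Num.Theory.
Local Open Scope ring_scope.
Set Implicit Arguments.
Unset Strict Implicit.
Unset Printing Implicit Defensive.

(* For lambda = k/s the point (1 - lambda) pi + lambda sigma is phi of the
   unitary whose (i, j) block is [pi i = j] (1 - P_k) + [sigma i = j] P_k, with
   P_k a rank k coordinate projection; and phi(U(ds)) lies in L_{d,s} because
   the block rows of a unitary, and the adjoints of its block columns, are
   witnesses for Brac.
   Conversely, if x lies on a cycle of length >= 3 of pi^-1 sigma, the rows
   sigma^-1 x and pi^-1 x of the matrix have supports meeting only in column
   x, with entries lambda and 1 - lambda there.  For Brac witnesses A, B of
   these rows, A_j B_j^* = 0 when j <> x, so X = A_x and Y = B_x satisfy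
   X Y^* = 0, X X^* <= 1, Y Y^* <= 1 and |X|^2 + |Y|^2 = s.  Expanding
   |1 - X^* X - Y^* Y|^2 writes s - |X|^2 - |Y|^2 = 0 as a sum of squares, so
   X^* X + Y^* Y = 1 and X^* X is a projection: s lambda = |X|^2 = tr X^* X is
   its rank. *)

Lemma mxtrace_pid (F : fieldType) n r :
  (r <= n)%N -> \tr (pid_mx r : 'M[F]_n) = r%:R.
Proof.
move=> le_rn; rewrite /mxtrace; under eq_bigr do rewrite mxE eqxx.
rewrite -[in RHS](card_ord r) -sumr_const (big_ord_widen _ (fun=> 1) le_rn).
by rewrite [RHS]big_mkcond; apply: eq_bigr => i _; case: (i < r)%N.
Qed.

Lemma mxtrace_idem (F : fieldType) n (P : 'M[F]_n) :
  P *m P = P -> \tr P = (\rank P)%:R.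
Proof.
move=> PP; set L := col_ebase P; set U := row_ebase P.
pose D : 'M[F]_n := pid_mx (\rank P).
have defP : P = L *m D *m U by rewrite mulmx_ebase.
have uL : L \in unitmx by apply: col_ebase_unit.
have uU : U \in unitmx by apply: row_ebase_unit.
have DULD : D *m (U *m L) *m D = D.
  apply: (can_inj (mulKmx uL)); apply: (can_inj (mulmxK uU)) => /=.
  by rewrite !mulmxA -defP -!mulmxA [X in P *m X]mulmxA -defP PP.
have DD : D *m D = D by apply: pid_mx_id; apply: rank_leq_row.
rewrite {1}defP -mulmxA mxtrace_mulC -{1}DD -!mulmxA mxtrace_mulC.
by rewrite DULD mxtrace_pid ?rank_leq_row.
Qed.

Section MxvecIndex.
Variables m n : nat.

Definition mxvec_unindex (k : 'I_(m * n)) : 'I_m * 'I_n :=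
  enum_val (cast_ord (esym (@mxvec_cast m n)) k).

Lemma mxvec_indexK (i : 'I_m) (j : 'I_n) :
  mxvec_unindex (mxvec_index i j) = (i, j).
Proof. by rewrite /mxvec_unindex cast_ordK enum_rankK. Qed.

Lemma eq_mxvec_index (i i' : 'I_m) (j j' : 'I_n) :
  (mxvec_index i j == mxvec_index i' j') = (i == i') && (j == j').
Proof.
have inj : injective (uncurry (@mxvec_index m n)).
  by apply: (can_inj (g := mxvec_unindex)) => -[i1 j1]; apply: mxvec_indexK.
by rewrite (inj_eq inj (i, j) (i', j')) xpair_eqE.
Qed.

Lemma big_mxvec_index (V : nmodType) (F : 'I_(m * n) -> V) :
  \sum_k F k = \sum_i \sum_j F (mxvec_index i j).
Proof.
rewrite pair_big (reindex _ (curry_mxvec_bij m n)).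
by apply: eq_bigr => -[i j].
Qed.

End MxvecIndex.

Local Notation "A ^H" := (ctrmx A) (at level 8, format "A ^H").
Section ConjugateTranspose.
Variable R : realType.
Local Notation C := R[i].
Local Open Scope complex_scope.

Lemma ctrmxE m n (X : 'M[C]_(m, n)) : X^H = (map_mx conjc X)^T.
Proof. by apply/matrixP => a b; rewrite !mxE. Qed.

Lemma ctrmxK m n (X : 'M[C]_(m, n)) : X^H^H = X.
Proof. by apply/matrixP => a b; rewrite !mxE conjcK. Qed.

Lemma ctrmx_mul m n p (X : 'M[C]_(m, n)) (Y : 'M[C]_(n, p)) :
  (X *m Y)^H = Y^H *m X^H.
Proof. by rewrite !ctrmxE map_mxM trmx_mul. Qed.

Lemma ctrmxB m n (X Y : 'M[C]_(m, n)) : (X - Y)^H = X^H - Y^H.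
Proof. by apply/matrixP => a b; rewrite !mxE rmorphB. Qed.

Lemma ctrmxD m n (X Y : 'M[C]_(m, n)) : (X + Y)^H = X^H + Y^H.
Proof. by apply/matrixP => a b; rewrite !mxE rmorphD. Qed.

Lemma ctrmx0 m n : (0 : 'M[C]_(m, n))^H = 0.
Proof. by apply/matrixP => a b; rewrite !mxE conjc0. Qed.

Lemma ctrmx1 n : (1%:M : 'M[C]_n)^H = 1%:M.
Proof. by apply/matrixP => a b; rewrite !mxE eq_sym conjc_nat. Qed.

Lemma sqmod_ge0 (z : C) : 0 <= sqmod z.
Proof. by rewrite /sqmod addr_ge0 ?sqr_ge0. Qed.

Lemma sqmod_eq0 (z : C) : (sqmod z == 0) = (z == 0).
Proof.
case: z => a b; rewrite /sqmod paddr_eq0 ?sqr_ge0 // !sqrf_eq0 /=.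
by rewrite eq_complex.
Qed.

Lemma mulcJ_sqmod (z : C) : z * z^* = (sqmod z)%:C.
Proof.
case: z => a b; rewrite /sqmod /=; apply/eqP; rewrite eq_complex /=.
by apply/andP; split; apply/eqP; ring.
Qed.

Lemma frob2_ge0 m n (X : 'M[C]_(m, n)) : 0 <= frob2 X.
Proof. by do 2!apply: sumr_ge0 => ? _; apply: sqmod_ge0. Qed.

Lemma frob2_eq0 m n (X : 'M[C]_(m, n)) : (frob2 X == 0) = (X == 0).
Proof.
rewrite /frob2 psumr_eq0 => [|a _]; last first.
  by apply: sumr_ge0 => b _; apply: sqmod_ge0.
apply/allP/eqP => [X0|-> a _ /=]; last first.
  by rewrite big1 // => b _; rewrite mxE /sqmod /= expr0n addr0.
apply/matrixP => a b; rewrite mxE; apply/eqP; rewrite -sqmod_eq0.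
move: (X0 a (mem_index_enum a)); rewrite /= psumr_eq0 => [|c _].
  by move=> /allP /(_ b (mem_index_enum b)).
exact: sqmod_ge0.
Qed.

Lemma frob2_ctrmx m n (X : 'M[C]_(m, n)) : frob2 X^H = frob2 X.
Proof.
rewrite /frob2 exchange_big; apply: eq_bigr => a _; apply: eq_bigr => b _.
by rewrite mxE; case: (X a b) => u v; rewrite /sqmod /= sqrrN.
Qed.

Lemma mxtrace_mul_ctrmx m n (X : 'M[C]_(m, n)) :
  \tr (X *m X^H) = (frob2 X)%:C.
Proof.
rewrite /mxtrace /frob2 rmorph_sum; apply: eq_bigr => a _.
rewrite mxE rmorph_sum; apply: eq_bigr => b _.
by rewrite mxE mulcJ_sqmod.
Qed.

Lemma mxtrace_ctrmx_mul m n (X : 'M[C]_(m, n)) :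
  \tr (X^H *m X) = (frob2 X)%:C.
Proof. by rewrite mxtrace_mulC mxtrace_mul_ctrmx. Qed.

Lemma sum_frob2_gram (I : finType) m n (Z : I -> 'M[C]_(m, n)) :
  \sum_i Z i *m (Z i)^H = 1%:M -> \sum_i frob2 (Z i) = m%:R.
Proof.
move=> gramZ; apply: (@complexI R).
rewrite rmorph_sum rmorph_nat -mxtrace1 -gramZ raddf_sum /=.
by apply: eq_bigr => i _; rewrite mxtrace_mul_ctrmx.
Qed.

End ConjugateTranspose.

Section OrthogonalContractions.
Variables (R : realType) (m n p : nat) (I : finType) (P : pred I).
Local Notation C := R[i].
Local Open Scope complex_scope.

Lemma mxtrace_gram_sqr (X : 'M[C]_(m, n)) (V : I -> 'M[C]_(m, p)) :
    X *m X^H + \sum_(i | P i) V i *m (V i)^H = 1%:M ->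
  \tr ((X^H *m X) *m (X^H *m X)) =
    (frob2 X - \sum_(i | P i) frob2 (X^H *m V i))%:C.
Proof.
move=> gramX; have eX : X *m X^H = 1%:M - \sum_(i | P i) V i *m (V i)^H.
  by rewrite -gramX addrK.
rewrite !mulmxA mxtrace_mulC !mulmxA -mulmxA {1}eX.
rewrite mulmxBl mul1mx raddfB /= mxtrace_mul_ctrmx rmorphB; congr (_ - _).
rewrite mulmx_suml raddf_sum rmorph_sum /=; apply: eq_bigr => i _.
by rewrite -mxtrace_ctrmx_mul ctrmx_mul ctrmxK -!mulmxA mxtrace_mulC !mulmxA.
Qed.

Lemma ctrmx_mul0C (X Y : 'M[C]_(m, n)) : X *m Y^H = 0 -> Y *m X^H = 0.
Proof. by move=> XY0; rewrite -[Y]ctrmxK -ctrmx_mul XY0 ctrmx0. Qed.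

Lemma gram_mul0 (X Y : 'M[C]_(m, n)) :
  X *m Y^H = 0 -> (X^H *m X) *m (Y^H *m Y) = 0.
Proof. by move=> XY0; rewrite mulmxA -(mulmxA X^H) XY0 mulmx0 mul0mx. Qed.

Lemma frob2_id_sub_grams (X Y : 'M[C]_(m, n)) (V W : I -> 'M[C]_(m, p)) :
    X *m X^H + \sum_(i | P i) V i *m (V i)^H = 1%:M ->
    Y *m Y^H + \sum_(i | P i) W i *m (W i)^H = 1%:M ->
    X *m Y^H = 0 ->
  frob2 (1%:M - (X^H *m X + Y^H *m Y)) + \sum_(i | P i) frob2 (X^H *m V i)
    + \sum_(i | P i) frob2 (Y^H *m W i) = n%:R - (frob2 X + frob2 Y).
Proof.
move=> gramX gramY XY0; apply: (@complexI R).
have /gram_mul0 PXY := XY0; have /ctrmx_mul0C/gram_mul0 PYX := XY0.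
set H := 1%:M - _.
have H_herm : H^H = H by rewrite /H ctrmxB ctrmx1 ctrmxD !ctrmx_mul !ctrmxK.
rewrite !rmorphD /= -mxtrace_mul_ctrmx H_herm.
rewrite /H mulmxBl mul1mx mulmxBr mulmx1 mulmxDl !mulmxDr PXY PYX addr0 add0r.
rewrite !(raddfB, raddfD) /= (mxtrace_gram_sqr gramX) (mxtrace_gram_sqr gramY).
by rewrite !mxtrace_ctrmx_mul !rmorphB rmorphN /= mxtrace1 rmorph_nat; ring.
Qed.

Lemma frob2_orthogonal_contractions_nat (X Y : 'M[C]_(m, n))
    (V W : I -> 'M[C]_(m, p)) :
    X *m X^H + \sum_(i | P i) V i *m (V i)^H = 1%:M ->
    Y *m Y^H + \sum_(i | P i) W i *m (W i)^H = 1%:M ->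
    X *m Y^H = 0 -> frob2 X + frob2 Y = n%:R ->
  exists2 r, (r <= n)%N & frob2 X = r%:R.
Proof.
move=> gramX gramY XY0 fXY.
have PXY := gram_mul0 XY0.
have := frob2_id_sub_grams gramX gramY XY0; rewrite fXY subrr.
set PX := X^H *m X; set H := 1%:M - _ => sos.
have H0 : H = 0.
  suff /eqP : frob2 H = 0 by rewrite frob2_eq0 => /eqP.
  have sumV_ge0 : 0 <= \sum_(i | P i) frob2 (X^H *m V i).
    by apply: sumr_ge0 => i _; apply: frob2_ge0.
  have sumW_ge0 : 0 <= \sum_(i | P i) frob2 (Y^H *m W i).
    by apply: sumr_ge0 => i _; apply: frob2_ge0.
  have := frob2_ge0 H; lra.
have idemPX : PX *m PX = PX.
  have sumPXY : PX + Y^H *m Y = 1%:M.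
    by apply/esym/eqP; rewrite -subr_eq0 -/H H0.
  by rewrite -{3}[PX]mulmx1 -sumPXY mulmxDr PXY addr0.
exists (\rank PX); first exact: rank_leq_row.
by apply: (@complexI R); rewrite rmorph_nat -mxtrace_idem // mxtrace_ctrmx_mul.
Qed.

End OrthogonalContractions.

Lemma Brac_single_overlap_nat (R : realType) d s (alpha beta : 'I_d -> R) x :
    (0 < s)%N -> Brac s alpha beta ->
    (forall j, j != x -> alpha j * beta j = 0) -> alpha x + beta x = 1 ->
  exists2 k, (k <= s)%N & alpha x = k%:R / s%:R.
Proof.
move=> s_gt0 [_ [_ [A [B [gramA [gramB [AB0 [normA normB]]]]]]]] disj sum1.
have s_neq0 : s%:R != 0 :> R by rewrite pnatr_eq0 -lt0n.
have frob2K (Z : 'M[R[i]]_s) : frob2 Z = s%:R * (s%:R^-1 * frob2 Z).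
  by rewrite mulrA mulfV ?mul1r.
have normZ0 (Z : 'M[R[i]]_s) : s%:R^-1 * frob2 Z = 0 -> Z = 0.
  by move=> Z0; apply/eqP; rewrite -frob2_eq0 frob2K Z0 mulr0.
have ABj0 j : j != x -> A j *m (B j)^H = 0.
  move=> jx; have /eqP := disj j jx; rewrite mulf_eq0 => /orP[] /eqP.
    by rewrite -normA => /normZ0 ->; rewrite mul0mx.
  by rewrite -normB => /normZ0 ->; rewrite ctrmx0 mulmx0.
have ABx0 : A x *m (B x)^H = 0.
  by rewrite -AB0 (bigD1 x) //= big1 ?addr0.
have gram_split (Z : 'I_d -> 'M[R[i]]_s) : \sum_j Z j *m (Z j)^H = 1%:M ->
    Z x *m (Z x)^H + \sum_(j | j != x) Z j *m (Z j)^H = 1%:M.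
  by rewrite (bigD1 x).
have fAB : frob2 (A x) + frob2 (B x) = s%:R.
  by rewrite (frob2K (A x)) (frob2K (B x)) normA normB -mulrDr sum1 mulr1.
have [k le_ks fA] := frob2_orthogonal_contractions_nat
  (gram_split _ gramA) (gram_split _ gramB) ABx0 fAB.
by exists k; rewrite // -normA fA mulrC.
Qed.

Section Blocks.
Variables (R : realType) (d s : nat).
Local Notation C := R[i].
Implicit Types (U V : 'M[C]_(d * s)) (G : 'I_d -> 'I_d -> 'M[C]_s).

Definition mxblk G : 'M[C]_(d * s) :=
  \matrix_(x, y) G (mxvec_unindex x).1 (mxvec_unindex y).1
                   (mxvec_unindex x).2 (mxvec_unindex y).2.

Lemma blk_mxblk G i j : blk (mxblk G) i j = G i j.
Proof. by apply/matrixP => a b; rewrite !mxE !mxvec_indexK. Qed.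

Lemma blkP U V : (forall i j, blk U i j = blk V i j) -> U = V.
Proof.
move=> eqUV; apply/matrixP => x y.
case/mxvec_indexP: x => i a; case/mxvec_indexP: y => j b.
by have := congr1 (fun M : 'M_s => M a b) (eqUV i j); rewrite !mxE.
Qed.

Lemma blk_mul U V i k : blk (U *m V) i k = \sum_j blk U i j *m blk V j k.
Proof.
apply/matrixP => a b; rewrite !mxE summxE big_mxvec_index.
by apply: eq_bigr => j _; rewrite !mxE; apply: eq_bigr => c _; rewrite !mxE.
Qed.

Lemma blk_ctrmx U i j : blk U^H i j = (blk U j i)^H.
Proof. by apply/matrixP => a b; rewrite !mxE. Qed.

Lemma blk1 i j : blk (1%:M : 'M[C]_(d * s)) i j = (i == j)%:R *: 1%:M.
Proof.
apply/matrixP => a b; rewrite !mxE eq_mxvec_index.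
by case: (i == j); case: (a == b); rewrite /= ?mulr1 ?mulr0.
Qed.

Lemma blk_gram_row U i k : U *m U^H = 1%:M ->
  \sum_j blk U i j *m (blk U k j)^H = (i == k)%:R *: 1%:M.
Proof.
move=> UU; rewrite -blk1 -UU blk_mul.
by apply: eq_bigr => j _; rewrite blk_ctrmx.
Qed.

Lemma blk_gram_col U j l : U^H *m U = 1%:M ->
  \sum_i (blk U i j)^H *m (blk U i l)^H^H = (j == l)%:R *: 1%:M.
Proof.
move=> UU; rewrite -blk1 -UU blk_mul.
by apply: eq_bigr => i _; rewrite blk_ctrmx ctrmxK.
Qed.

End Blocks.

Section GramFamilies.
Variables (R : realType) (d s : nat).
Hypothesis s_gt0 : (0 < s)%N.
Implicit Types (Z : 'I_d -> 'M[R[i]]_s) (alpha : 'I_d -> R).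

Lemma probvec_gram Z alpha :
    (forall j, s%:R^-1 * frob2 (Z j) = alpha j) ->
  \sum_j Z j *m (Z j)^H = 1%:M -> probvec alpha.
Proof.
move=> normZ gramZ; split=> [j|].
  by rewrite -normZ mulr_ge0 ?invr_ge0 ?frob2_ge0.
under eq_bigr do rewrite -normZ.
by rewrite -mulr_sumr (sum_frob2_gram gramZ) mulVf // pnatr_eq0 -lt0n.
Qed.

Lemma Brac_gram Z Z' alpha beta :
    (forall j, s%:R^-1 * frob2 (Z j) = alpha j) ->
    (forall j, s%:R^-1 * frob2 (Z' j) = beta j) ->
    \sum_j Z j *m (Z j)^H = 1%:M -> \sum_j Z' j *m (Z' j)^H = 1%:M ->
    \sum_j Z j *m (Z' j)^H = 0 ->
  Brac s alpha beta.
Proof.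
move=> normZ normZ' gramZ gramZ' ZZ'0.
by split; [|split]; [exact: probvec_gram normZ gramZ
  | exact: probvec_gram normZ' gramZ' | exists Z, Z'].
Qed.

End GramFamilies.

Lemma Uset_sub_Lset (R : realType) d s (M : 'M[R]_d) :
  (0 < s)%N -> Uset s M -> Lset s M.
Proof.
move=> s_gt0 [U [[UU UU'] <-]].
have row_gram i : \sum_j blk U i j *m (blk U i j)^H = 1%:M.
  by rewrite blk_gram_row // eqxx scale1r.
have col_gram j : \sum_i (blk U i j)^H *m (blk U i j)^H^H = 1%:M.
  by rewrite blk_gram_col // eqxx scale1r.
have phi_row i j : s%:R^-1 * frob2 (blk U i j) = phi U i j by rewrite mxE.
have phi_col i j : s%:R^-1 * frob2 (blk U i j)^H = phi U i j.
  by rewrite mxE frob2_ctrmx.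
split; [split; [|split]|split].
- by move=> i j; have [] := probvec_gram s_gt0 (phi_row i) (row_gram i).
- by move=> i; have [] := probvec_gram s_gt0 (phi_row i) (row_gram i).
- by move=> j; have [] := probvec_gram s_gt0 (phi_col^~ j) (col_gram j).
- move=> i k ik; apply: (Brac_gram s_gt0 (phi_row i) (phi_row k)) => //.
  by rewrite blk_gram_row // (negPf ik) scale0r.
- move=> j l jl; apply: (Brac_gram s_gt0 (phi_col^~ j) (phi_col^~ l)) => //.
  by rewrite blk_gram_col // (negPf jl) scale0r.
Qed.

Section TwoPermutationUnitary.
Variables (R : realType) (d s k : nat) (pi sigma : 'S_d).
Hypothesis le_ks : (k <= s)%N.
Local Notation C := R[i].

Definition two_perm_blk i j : 'M[C]_s :=
  (pi i == j)%:R *: copid_mx k + (sigma i == j)%:R *: pid_mx k.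

Lemma two_perm_blk_herm i j : (two_perm_blk i j)^H = two_perm_blk i j.
Proof.
rewrite ctrmxE map_mxD !map_mxZ map_copid_mx map_pid_mx !rmorph_nat.
by rewrite linearD !linearZ /= tr_pid_mx /copid_mx linearB /= trmx1 tr_pid_mx.
Qed.

Lemma two_perm_blk_mul i i' j :
  two_perm_blk i j *m two_perm_blk i' j =
    ((pi i == j) && (pi i' == j))%:R *: copid_mx k +
    ((sigma i == j) && (sigma i' == j))%:R *: pid_mx k.
Proof.
rewrite mulmxDl !mulmxDr -!scalemxAl -!scalemxAr !scalerA.
rewrite copid_mx_id // mul_copid_mx_pid // mul_pid_mx_copid // pid_mx_id //.
by rewrite !scaler0 addr0 add0r -!natrM !mulnb.
Qed.

Lemma unitary_two_perm : unitary (mxblk two_perm_blk).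
Proof.
suff UU : mxblk two_perm_blk *m (mxblk two_perm_blk)^H = 1%:M.
  by split; last exact: mulmx1C.
apply: blkP => i i'; rewrite blk_mul blk1.
under eq_bigr do
  rewrite blk_ctrmx !blk_mxblk two_perm_blk_herm two_perm_blk_mul.
rewrite big_split /= -!scaler_suml.
have sum_perm (t : 'S_d) :
    \sum_j (((t i == j) && (t i' == j))%:R : C) = (i == i')%:R.
  rewrite (bigD1 (t i)) //= eqxx big1 ?addr0 => [|j /negPf].
    by rewrite (inj_eq perm_inj) eq_sym.
  by rewrite eq_sym => ->.
by rewrite !sum_perm -scalerDr /copid_mx subrK.
Qed.

Lemma frob2_two_perm_blk i j :
  frob2 (two_perm_blk i j) =
    (pi i == j)%:R * (s%:R - k%:R) + (sigma i == j)%:R * k%:R.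
Proof.
apply: (@complexI R).
rewrite -mxtrace_mul_ctrmx two_perm_blk_herm two_perm_blk_mul.
rewrite !andbb raddfD /= !mxtraceZ /copid_mx raddfB /= mxtrace1 mxtrace_pid //.
by rewrite !(rmorphD, rmorphM, rmorphN, rmorph_nat).
Qed.

End TwoPermutationUnitary.

Lemma Uset_two_perm (R : realType) d s k (pi sigma : 'S_d) :
    (0 < s)%N -> (k <= s)%N ->
  Uset s ((1 - k%:R / s%:R) *: perm_mx pi + (k%:R / s%:R) *: perm_mx sigma
           : 'M[R]_d).
Proof.
move=> s_gt0 le_ks; have s_neq0 : s%:R != 0 :> R by rewrite pnatr_eq0 -lt0n.
exists (mxblk (two_perm_blk R s k pi sigma)).
split; first exact: unitary_two_perm.
by apply/matrixP => i j; rewrite !mxE blk_mxblk frob2_two_perm_blk //; field.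
Qed.

Lemma porbit_ge3_neq (T : finType) (t : {perm T}) x :
  (3 <= #|porbit t x|)%N -> t x != x /\ t (t x) != x.
Proof.
move=> ge3; have := uniq_traject_porbit t x; move: ge3.
case: #|porbit t x| => [|[|[|n]]] //= _.
rewrite !inE !negb_or => /andP[/and3P[xtx xttx _] _].
by rewrite ![_ == x]eq_sym.
Qed.

Lemma Lset_two_perm_nat (R : realType) d s (pi sigma : 'S_d) x (lambda : R) :
    (0 < s)%N -> (3 <= #|porbit (pi^-1 * sigma)%g x|)%N ->
    Lset s ((1 - lambda) *: perm_mx pi + lambda *: perm_mx sigma) ->
  exists2 k, (k <= s)%N & lambda = k%:R / s%:R.
Proof.
move=> s_gt0 /porbit_ge3_neq[]; rewrite !permM => tx ttx.
set M := (X in Lset s X) => -[_ [Lrows _]].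
set r1 := (sigma^-1 x)%g; set r2 := (pi^-1 x)%g.
have sigma_r1 : sigma r1 = x by rewrite permKV.
have pi_r2 : pi r2 = x by rewrite permKV.
have r12 : r1 != r2 by apply: contraNneq tx => r12; rewrite -/r2 -r12 sigma_r1.
have pi_r1 : pi r1 != x by rewrite -pi_r2 (inj_eq perm_inj).
have sigma_r2 : sigma r2 != x by rewrite -sigma_r1 (inj_eq perm_inj) eq_sym.
have pi_sigma : pi r1 != sigma r2.
  by apply: contraNneq ttx => pi_sigma; rewrite -/r2 -pi_sigma permK sigma_r1.
have M_E r j :
    M r j = (1 - lambda) * (pi r == j)%:R + lambda * (sigma r == j)%:R.
  by rewrite !mxE.
have disj j : j != x -> M r1 j * M r2 j = 0.
  rewrite !M_E sigma_r1 pi_r2 ![x == j]eq_sym => /negPf->.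
  case: eqP => [<-|_] /=; last lra.
  by rewrite [sigma r2 == _]eq_sym (negPf pi_sigma) /=; lra.
have sum1 : M r1 x + M r2 x = 1.
  by rewrite !M_E sigma_r1 pi_r2 (negPf pi_r1) (negPf sigma_r2) !eqxx /=; lra.
have [k le_ks] := Brac_single_overlap_nat s_gt0 (Lrows r1 r2 r12) disj sum1.
rewrite M_E sigma_r1 (negPf pi_r1) eqxx /= => lambdaE.
by exists k => //; rewrite -lambdaE; lra.
Qed.

Unset Implicit Arguments.

Theorem proposition3p13 (R : realType) (d s : nat) (pi sigma : 'S_d) :
  (3 <= d)%N -> (1 <= s)%N ->
  (exists (i : 'I_d), (3 <= #|porbit (pi^-1 * sigma)%g i|)%N) ->
  forall lambda : R, 0 <= lambda <= 1 ->
    let M := (1 - lambda) *: perm_mx pi + lambda *: perm_mx sigma in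
    (Uset s M <-> Lset s M) /\
    (Lset s M <-> exists k : nat, (k <= s)%N /\ lambda = k%:R / s%:R).
Proof.
move=> _ s_gt0 [x cycle_x] lambda _ M.
have UL : Uset s M -> Lset s M := Uset_sub_Lset s_gt0.
have LK : Lset s M -> exists k : nat, (k <= s)%N /\ lambda = k%:R / s%:R.
  by case/(Lset_two_perm_nat s_gt0 cycle_x) => k; exists k.
have KU : (exists k : nat, (k <= s)%N /\ lambda = k%:R / s%:R) -> Uset s M.
  by case=> k [le_ks lambdaE]; rewrite /M lambdaE; apply: Uset_two_perm.
by split; [split=> [/UL|/LK/KU] | split=> [/LK|/KU/UL]].
Qed.
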